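(* Fix an agent $i$ with $\theta_i^*\in\Theta_i$ and $\sigma^2>0$. If $p_i(t)\sim\mathcal N(0,\sigma^2)$ and $x_i(t)=x_i^*(p_i(t))$, then there exists $\delta>0$ such that \[ \mathbb E\big[\xi_i(t)\xi_i(t)^\top\delta_i(t)\big]\succeq\delta\,\mathbb I_d. \]
   Context: $\mathcal X_i\subset\mathbb R$ is a compact interval with nonempty interior; $\Phi(x)=(x,x^2,\dots,x^d)^\top$; $\Theta_i=\{\theta\in\mathbb R^d: m_i\le\theta^\top\nabla^2\Phi(x)\le M_i\ \forall x\in\mathcal X_i\}$ for constants $0<m_i\le M_i$. The best response to incentive $p$ is $x_i^*(p)=\arg\min_{x\in\mathcal X_i}(\theta_i^{*\top}\Phi(x)+px)$. $\xi_i(t)=\nabla\Phi(x_i(t))$ and $\delta_i(t)=\mathbf 1\{x_i(t)\in\operatorname{int}\mathcal X_i\}$. *)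

From HB Require Import structures.
From mathcomp Require Import all_boot all_order all_algebra.
From mathcomp Require Import all_classical all_reals all_analysis.
Set Implicit Arguments. Unset Strict Implicit. Unset Printing Implicit Defensive.
Import Order.TTheory GRing.Theory Num.Theory.
Local Open Scope ring_scope.

Definition Phi {R : realType} (d : nat) (x : R) : 'cV[R]_d :=
  \col_(k < d) x ^+ k.+1.

Definition gradPhi {R : realType} (d : nat) (x : R) : 'cV[R]_d :=
  \col_(k < d) ((k.+1)%:R * x ^+ k).

Definition hessPhi {R : realType} (d : nat) (x : R) : 'cV[R]_d :=
  \col_(k < d) (((k.+1 * k)%N)%:R * x ^+ k.-1).

Definition Theta {R : realType} (d : nat) (a b m M : R) : set 'cV[R]_d :=
  [set theta | forall x : R, a <= x <= b ->
     m <= (theta^T *m hessPhi d x) 0 0 <= M].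

Definition cost {R : realType} (d : nat) (theta : 'cV[R]_d) (p x : R) : R :=
  (theta^T *m Phi d x) 0 0 + p * x.

Definition is_best_response {R : realType} (d : nat) (a b : R)
    (theta : 'cV[R]_d) (p x : R) : Prop :=
  a <= x <= b /\ forall y : R, a <= y <= b -> cost theta p x <= cost theta p y.

(* E[ xi xi^T delta ] where p ~ N(0, sigma^2), x = xs p, xi = nabla Phi(x),
   delta = 1{x in int [a,b]}; entrywise expectation. *)
Definition Exi {R : realType} (d : nat) (a b sigma : R) (xs : R -> R) : 'M[R]_d :=
  \matrix_(j < d, k < d)
    Rintegral (normal_prob 0 sigma) setT
      (fun p => ((gradPhi d (xs p) *m (gradPhi d (xs p))^T) j k)
                * (if (a < xs p) && (xs p < b) then 1 else 0)).

(* Positive semidefiniteness; A >= B in Loewner order iff psd (A - B). *)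
Definition psd {R : realType} (d : nat) (A : 'M[R]_d) : Prop :=
  forall v : 'cV[R]_d, 0 <= (v^T *m A *m v) 0 0.
Arguments Theta {R} d a b m M.

(* Write F for the polynomial theta^T Phi.  Since F'' >= m > 0 on [a, b], the
   best response xs p, a minimiser of F(x) + p x, is nonincreasing in p (hence
   measurable) and lies in [x0, x1] as soon as -F'(x1) <= p <= -F'(x0).  For
   v <> 0 the quadratic form v^T E[xi xi^T delta] v equals E[Q(xs p)^2 delta]
   with Q := (v^T Phi)' a nonzero polynomial.  Pick x0 in ]a, b[ with Q(x0) <> 0
   and x1 > x0 so close that |Q| >= |Q(x0)|/2 on [x0, x1]: the incentives
   steering xs p into [x0, x1] form an interval of positive Gaussian mass, so the
   form is positive.  Compactness of the unit sphere turns positive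
   definiteness into a uniform lower bound delta. *)

From HB Require Import structures.
From mathcomp Require Import all_boot all_order all_algebra.
From mathcomp Require Import all_classical all_reals all_analysis.
From mathcomp Require Import measurable_realfun polyrcf.
From mathcomp Require Import ring lra.
Import Order.TTheory GRing.Theory Num.Theory.
Import numFieldNormedType.Exports.
Set Implicit Arguments.
Unset Strict Implicit.
Unset Printing Implicit Defensive.
Local Open Scope classical_set_scope.
Local Open Scope ring_scope.

(* With the analysis notations in scope, [p^`()] would parse as the derivative
   of the function [horner p]; hence polynomial derivatives are written [deriv p]. *)
Section PolyPhi.
Variables (R : realType) (d : nat).

Definition polyPhi (theta : 'cV[R]_d) : {poly R} :=
  \sum_(k < d) theta k 0 *: 'X^(k.+1).

Lemma horner_polyPhi theta x : (polyPhi theta).[x] = (theta^T *m Phi d x) 0 0.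
Proof.
rewrite !mxE horner_sum; apply: eq_bigr => k _.
by rewrite !mxE hornerZ hornerXn.
Qed.

Lemma horner_deriv_polyPhi theta x :
  (deriv (polyPhi theta)).[x] = (theta^T *m gradPhi d x) 0 0.
Proof.
rewrite raddf_sum horner_sum !mxE; apply: eq_bigr => k _ /=.
by rewrite (@derivZ R) derivXn !mxE hornerZ hornerMn hornerXn -mulr_natl mulrCA.
Qed.

Lemma horner_deriv2_polyPhi theta x :
  (deriv (deriv (polyPhi theta))).[x] = (theta^T *m hessPhi d x) 0 0.
Proof.
rewrite !raddf_sum horner_sum !mxE; apply: eq_bigr => k _ /=.
rewrite !(@derivZ R) derivXn derivMn derivXn !mxE hornerZ !hornerMn hornerXn /=.
by rewrite -mulrnA mulr_natl mulnC.
Qed.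

Lemma coef_deriv_polyPhi theta (k : 'I_d) :
  (deriv (polyPhi theta))`_k = theta k 0 * k.+1%:R.
Proof.
rewrite coef_deriv coef_sum (bigD1 k) //= coefZ coefXn eqxx mulr1 big1 ?addr0.
  by rewrite mulr_natr.
by move=> j jk; rewrite coefZ coefXn eqSS eq_sym -[_ == _]/(j == k) (negbTE jk) mulr0.
Qed.

Lemma deriv_polyPhi_eq0 theta : (deriv (polyPhi theta) == 0) = (theta == 0).
Proof.
apply/eqP/eqP => [h|->]; last by rewrite /polyPhi big1 ?deriv0 // => k _; rewrite mxE scale0r.
apply/matrixP => k i; rewrite (ord1 i) mxE.
have /eqP := coef_deriv_polyPhi theta k; rewrite h coef0 eq_sym mulf_eq0.
by rewrite pnatr_eq0 orbF => /eqP.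
Qed.

Lemma cost_polyPhi theta p x : cost theta p x = (polyPhi theta).[x] + p * x.
Proof. by rewrite /cost horner_polyPhi. Qed.

End PolyPhi.

Section PolyLocal.
Variable R : realType.

Lemma exists_noroot_in_itv (q : {poly R}) a b : q != 0 -> a < b ->
  exists2 x, a < x < b & ~~ root q x.
Proof.
move=> q_neq0 ab; set r := next_root q a b.
have ar : a < r := next_root_gt ab q_neq0.
have rb : r <= b.
  by have := next_root_in q a b; rewrite in_itv /= (max_l (ltW ab)) => /andP[].
have mid_in : (a + r) / 2 \in `]a, r[ by exact: mid_in_itv.
exists ((a + r) / 2); last exact: next_noroot mid_in.
by move: mid_in; rewrite in_itv /= => /andP[-> /lt_le_trans->].
Qed.

Lemma horner_bounded_away_near (q : {poly R}) x : ~~ root q x ->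
  exists2 eta, 0 < eta & forall y, `|y - x| < eta -> `|q.[x]| / 2 <= `|q.[y]|.
Proof.
move=> qx_neq0; have qx_gt0 : 0 < `|q.[x]| / 2 by rewrite divr_gt0 ?normr_gt0.
have [eta eta_gt0 q_near] := poly_cont x q qx_gt0.
exists eta => // y /q_near; rewrite distrC => qyx.
have := ler_normD (q.[x] - q.[y]) q.[y]; rewrite subrK; lra.
Qed.

End PolyLocal.

Section TiltedMinimizer.
Variables (R : realType) (a b : R) (F : {poly R}).
Hypothesis deriv2_gt0 : forall x, x \in `]a, b[ -> 0 < (deriv (deriv F)).[x].

Lemma tangent_lt_poly x y : a <= x <= b -> a <= y <= b -> x != y ->
  (deriv F).[x] * (y - x) < F.[y] - F.[x].
Proof.
have F'_ltr := ltr_hornerW deriv2_gt0.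
move=> /andP[ax xb] /andP[ay yb]; rewrite neq_lt => /orP[xy|yx].
- have [c /andP[xc cy] ->] := poly_mvt F xy.
  rewrite ltr_pM2r ?subr_gt0 // F'_ltr ?in_itv /= ?ax ?xb //.
  by rewrite (le_trans ax (ltW xc)) (le_trans (ltW cy) yb).
- have [c /andP[yc cx] E] := poly_mvt F yx.
  have F'c : (deriv F).[c] < (deriv F).[x].
    by rewrite F'_ltr ?in_itv /= ?ax ?xb // (le_trans ay (ltW yc)) (le_trans (ltW cx) xb).
  have : (deriv F).[c] * (x - y) < (deriv F).[x] * (x - y) by rewrite ltr_pM2r ?subr_gt0.
  lra.
Qed.

Lemma tilted_minimizer_between p y xlo xhi :
  a <= xlo -> xlo <= xhi -> xhi <= b ->
  - (deriv F).[xhi] <= p <= - (deriv F).[xlo] ->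
  a <= y <= b -> (forall z, a <= z <= b -> F.[y] + p * y <= F.[z] + p * z) ->
  xlo <= y <= xhi.
Proof.
move=> axlo xlohi xhib /andP[phi plo] yab ymin.
have xloab : a <= xlo <= b by rewrite axlo (le_trans xlohi xhib).
have xhiab : a <= xhi <= b by rewrite xhib (le_trans axlo xlohi).
(* Outside [xlo, xhi] the tangent inequality at the nearer endpoint makes that
   endpoint strictly cheaper than y. *)
apply/andP; split; rewrite leNgt; apply/negP => ylt.
- have := tangent_lt_poly xloab yab (negbT (gt_eqF ylt)); have := ymin _ xloab.
  have : 0 <= (- (deriv F).[xlo] - p) * (xlo - y).
    by rewrite mulr_ge0 // subr_ge0 // ltW.
  nra.
- have := tangent_lt_poly xhiab yab (negbT (lt_eqF ylt)); have := ymin _ xhiab.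
  have : 0 <= (p + (deriv F).[xhi]) * (y - xhi).
    by rewrite mulr_ge0 ?subr_ge0 ?(ltW ylt) // -lerBlDr sub0r.
  nra.
Qed.

End TiltedMinimizer.

Lemma tilted_argmin_nonincreasing (R : realType) (S : set R) (f xs : R -> R) :
  (forall p, S (xs p)) ->
  (forall p z, S z -> f (xs p) + p * xs p <= f z + p * z) ->
  nonincreasing_fun xs.
Proof.
move=> xsS xsmin p q; rewrite le_eqVlt => /orP[/eqP->//|pq].
rewrite leNgt; apply/negP => xslt.
have := xsmin p _ (xsS q); have := xsmin q _ (xsS p).
have : 0 < (q - p) * (xs q - xs p) by rewrite mulr_gt0 // subr_gt0.
nra.
Qed.

Section UniformPositivity.
Variable R : realType.

Lemma continuous_quad_form_rV n (A : 'M[R]_n) :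
  continuous (fun w : 'rV[R]_n => (w *m A *m w^T) 0 0).
Proof.
have term_cont i j : continuous (fun w : 'rV[R]_n => w 0 j * A j i * w 0 i).
  move=> w; apply: (@continuousM R _ (fun w : 'rV[R]_n => w 0 j * A j i) (fun w => w 0 i));
    last exact: coord_continuous.
  apply: (@continuousM R _ (fun w : 'rV[R]_n => w 0 j) (fun=> A j i));
    [exact: coord_continuous | exact: cst_continuous].
have sum_cont i : continuous (fun w : 'rV[R]_n => \sum_(j < n) w 0 j * A j i * w 0 i).
  by apply: continuous_big => //; exact: add_continuous.
have -> : (fun w : 'rV[R]_n => (w *m A *m w^T) 0 0) =
    (fun w => \sum_(i < n) \sum_(j < n) w 0 j * A j i * w 0 i).
  apply/funext => w; rewrite !mxE; apply: eq_bigr => i _.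
  by rewrite !mxE big_distrl.
by apply: continuous_big => //; exact: add_continuous.
Qed.

Lemma normr_mx_entry_le m n (w : 'M[R]_(m, n)) i j : `|w i j| <= `|w|.
Proof.
rewrite [leRHS]/Num.norm /= mx_normrE; apply/bigmax_geP; right => /=.
by exists (i, j).
Qed.

Lemma compact_unit_sphere_rV n : compact [set w : 'rV[R]_n | `|w| = 1].
Proof.
apply: bounded_closed_compact.
  by exists 1; split => // r r1 w /= ->; rewrite ltW.
have -> : [set w : 'rV[R]_n | `|w| = 1] = (@Num.norm _ _) @^-1` [set 1] by [].
apply: preimage_closed => [w _|]; first exact: norm_continuous.
exact: closed_eq.
Qed.

Lemma unit_sphere_rV_neq0 n : [set w : 'rV[R]_n.+1 | `|w| = 1] !=set0.
Proof.
pose w0 : 'rV[R]_n.+1 := const_mx 1.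
have w0_neq0 : `|w0| != 0.
  rewrite normr_eq0; apply/eqP => /matrixP/(_ 0 0)/eqP.
  by rewrite !mxE oner_eq0.
by exists (`|w0|^-1 *: w0); rewrite /= normrZ normfV normr_id mulVf.
Qed.

Lemma quad_form_rV_scale n (A : 'M[R]_n) (l : R) (w : 'rV[R]_n) :
  ((l *: w) *m A *m (l *: w)^T) 0 0 = l ^+ 2 * (w *m A *m w^T) 0 0.
Proof.
by rewrite linearZ /= -scalemxAl -scalemxAl -scalemxAr !mxE expr2 mulrA.
Qed.

(* Rows rather than columns: [bounded_closed_compact] is stated for 'rV. *)
Lemma quad_form_rV_lower_bound n (A : 'M[R]_n.+1) :
  (forall w : 'rV[R]_n.+1, w != 0 -> 0 < (w *m A *m w^T) 0 0) ->
  exists2 mu, 0 < mu & forall w : 'rV[R]_n.+1, mu * `|w| ^+ 2 <= (w *m A *m w^T) 0 0.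
Proof.
move=> A_pos; pose q (w : 'rV[R]_n.+1) := (w *m A *m w^T) 0 0.
have [c /set_mem c1 c_min] := compact_EVT_min (@unit_sphere_rV_neq0 n)
  (@compact_unit_sphere_rV n.+1) (continuous_subspaceT (@continuous_quad_form_rV n.+1 A)).
have c_neq0 : c != 0 by rewrite -normr_eq0 c1 oner_neq0.
exists (q c) => [|w]; first exact: A_pos.
have [->|w_neq0] := eqVneq w 0.
  by rewrite normr0 expr0n mulr0 mul0mx trmx0 mulmx0 mxE.
have w_gt0 : 0 < `|w| by rewrite normr_gt0.
have /c_min : `|w|^-1 *: w \in [set w : 'rV[R]_n.+1 | `|w| = 1].
  by rewrite inE /= normrZ normfV normr_id mulVf ?gt_eqF.
rewrite quad_form_rV_scale exprVn => c_le.
by rewrite -ler_pdivlMr ?exprn_gt0 // mulrC.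
Qed.

Lemma sum_sqr_mx_entry_le n (w : 'rV[R]_n) :
  \sum_(j < n) w 0 j ^+ 2 <= n%:R * `|w| ^+ 2.
Proof.
rewrite mulr_natl -[n in _ *+ n]card_ord -sumr_const; apply: ler_sum => j _.
rewrite -real_normK ?num_real // lerXn2r ?nnegrE //.
exact: normr_mx_entry_le.
Qed.

Lemma pos_def_psd_sub_scalar d (A : 'M[R]_d) :
  (forall v : 'cV[R]_d, v != 0 -> 0 < (v^T *m A *m v) 0 0) ->
  exists delta, 0 < delta /\ psd (A - delta%:M).
Proof.
case: d A => [A _|n A A_pos]; first by exists 1; split => // v; rewrite !mxE big_ord0.
have [mu mu_gt0 mu_le] : exists2 mu, 0 < mu &
    forall w : 'rV[R]_n.+1, mu * `|w| ^+ 2 <= (w *m A *m w^T) 0 0.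
  apply: quad_form_rV_lower_bound => w w_neq0.
  by have := A_pos w^T; rewrite trmxK; apply; rewrite trmx_eq0.
(* [`|w|] is the sup norm of the entries, hence the factor n.+1. *)
exists (mu / n.+1%:R); split => [|v]; first by rewrite divr_gt0.
have -> : (v^T *m (A - (mu / n.+1%:R)%:M) *m v) 0 0 =
    (v^T *m A *m v) 0 0 - mu / n.+1%:R * \sum_(j < n.+1) v^T 0 j ^+ 2.
  rewrite mulmxBr mulmxBl mul_mx_scalar -scalemxAl !mxE; congr (_ - _).
  by congr (_ * _); apply: eq_bigr => j _; rewrite !mxE expr2.
rewrite subr_ge0; have := mu_le v^T; rewrite trmxK; apply: le_trans.
rewrite mulrAC ler_pdivrMr ?ltr0n // -mulrA ler_pM2l // mulrC.
exact: sum_sqr_mx_entry_le.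
Qed.
End UniformPositivity.

Section RintegralSum.
Context d (T : measurableType d) (R : realType).
Variables (mu : {measure set T -> \bar R}) (D : set T).
Hypothesis mD : measurable D.

Lemma integrable_sum_EFin (I : Type) (s : seq I) (F : I -> T -> R) :
  (forall i, mu.-integrable D (EFin \o F i)) ->
  mu.-integrable D (EFin \o (fun x => \sum_(i <- s) F i x)).
Proof.
move=> F_int; have := @integrable_sum _ _ _ mu _ mD _ s xpredT _ (fun i _ => F_int i).
by apply: eq_integrable => // x _; rewrite /= sumEFin.
Qed.

Lemma Rintegral_sum (I : Type) (s : seq I) (F : I -> T -> R) :
  (forall i, mu.-integrable D (EFin \o F i)) ->
  \int[mu]_(x in D) (\sum_(i <- s) F i x) = \sum_(i <- s) \int[mu]_(x in D) F i x.
Proof.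
move=> F_int; elim: s => [|i s IHs].
  rewrite big_nil -[RHS](mul0r (fine (mu D))) -Rintegral_cst //.
  by apply: eq_Rintegral => x _; rewrite big_nil.
rewrite big_cons -IHs -RintegralD //; last exact: integrable_sum_EFin.
by apply: eq_Rintegral => x _; rewrite big_cons.
Qed.

End RintegralSum.

Section ProbabilityIntegrals.
Context d (T : measurableType d) (R : realType) (P : probability T R).

Lemma bounded_integrable (g : T -> R) C : measurable_fun setT g ->
  (forall x, `|g x| <= C) -> P.-integrable setT (EFin \o g).
Proof.
move=> mg g_le; apply: measurable_bounded_integrable => //.
  exact: le_lt_trans (probability_le1 _ measurableT) (ltry 1).
by exists C; split; [exact: num_real | move=> r Cr x _; exact: le_trans (g_le x) (ltW Cr)].
Qed.

Lemma Rintegral_quad_form n (G : T -> 'M[R]_n) (v : 'cV[R]_n) :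
  (forall j k, P.-integrable setT (EFin \o fun x => G x j k)) ->
  (v^T *m (\matrix_(j, k) \int[P]_x G x j k) *m v) 0 0 =
  \int[P]_x (v^T *m G x *m v) 0 0.
Proof.
move=> G_int; pose H k j x := v j 0 * v k 0 * G x j k.
have H_int k j : P.-integrable setT (EFin \o H k j).
  have := integrableZl measurableT (v j 0 * v k 0) (G_int j k).
  by apply: eq_integrable.
have -> : (fun x => (v^T *m G x *m v) 0 0) = (fun x => \sum_k \sum_j H k j x).
  apply/funext => x; rewrite mxE; apply: eq_bigr => k _.
  by rewrite mxE mulr_suml; apply: eq_bigr => j _; rewrite !mxE /H; ring.
rewrite Rintegral_sum // => [|k]; last exact: integrable_sum_EFin.
rewrite mxE; apply: eq_bigr => k _; rewrite Rintegral_sum // mxE mulr_suml.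
by apply: eq_bigr => j _; rewrite RintegralZl // !mxE; ring.
Qed.

Lemma Rintegral_gt0_indic_le (g : T -> R) (A : set T) c : measurable A ->
  (0 < P A)%E -> 0 < c -> P.-integrable setT (EFin \o g) ->
  (forall x, c * \1_A x <= g x) -> 0 < \int[P]_x g x.
Proof.
move=> mA PA_gt0 c_gt0 g_int g_ge.
have indic_int : P.-integrable setT (EFin \o \1_A).
  apply: (@bounded_integrable _ 1); first exact: measurable_indic.
  by move=> x; rewrite indicE; case: (x \in A); rewrite ?normr1 ?normr0.
have cindic_int : P.-integrable setT (EFin \o fun x => c * \1_A x).
  by have := integrableZl measurableT c indic_int; apply: eq_integrable.
apply: lt_le_trans (le_Rintegral measurableT cindic_int g_int (fun x _ => g_ge x)).
rewrite RintegralZl // mulr_gt0 // /Rintegral integral_indic // setIT.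
rewrite fine_gt0 // PA_gt0 /=; exact: le_lt_trans (probability_le1 _ mA) (ltry 1).
Qed.

End ProbabilityIntegrals.

Lemma normal_prob_itv_gt0 (R : realType) (mu sigma p1 p2 : R) :
  sigma != 0 -> p1 < p2 -> (0 < normal_prob mu sigma `[p1, p2])%E.
Proof.
move=> sigma_neq0 p12.
pose c := normal_peak sigma *
  expR (- ((p1 - mu) ^+ 2 + (p2 - mu) ^+ 2) / (sigma ^+ 2 *+ 2)).
have c_gt0 : 0 < c by rewrite mulr_gt0 ?expR_gt0 ?normal_peak_gt0.
apply: (@lt_le_trans _ _ (c * (p2 - p1))%:E); first by rewrite lte_fin mulr_gt0 ?subr_gt0.
have -> : ((c * (p2 - p1))%:E = \int[lebesgue_measure]_(x in `[p1, p2]) (cst c%:E) x)%E.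
  rewrite integral_cst /=; last exact: measurable_itv.
  by rewrite lebesgue_measure_itv /= lte_fin p12 -EFinD EFinM.
apply: ge0_le_integral => //=.
- by move=> x _; rewrite lee_fin ltW.
- by apply/measurable_EFinP; apply: measurable_funTS; exact: measurable_normal_pdf.
have sqr_le y : p1 <= y -> y <= p2 -> (y - mu) ^+ 2 <= (p1 - mu) ^+ 2 + (p2 - mu) ^+ 2.
  move=> p1y yp2; have := sqr_ge0 (p1 - mu); have := sqr_ge0 (p2 - mu).
  case: (lerP mu y) => [muy|ymu].
    have : 0 <= (p2 - y) * (p2 + y - mu *+ 2) by apply: mulr_ge0; lra.
    nra.
  have : 0 <= (y - p1) * (mu *+ 2 - y - p1) by apply: mulr_ge0; lra.
  nra.
move=> x; rewrite in_itv /= => /andP[p1x xp2].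
rewrite lee_fin normal_pdfE // ler_pM2l ?normal_peak_gt0 // ler_expR !mulNr lerN2.
by rewrite ler_pM2r ?sqr_le // invr_gt0 pmulrn_lgt0 // exprn_even_gt0.
Qed.

Section BestResponse.
Variables (R : realType) (d : nat) (a b m M : R) (theta : 'cV[R]_d) (xs : R -> R).
Hypotheses (m_gt0 : 0 < m) (theta_in : Theta d a b m M theta)
  (xs_br : forall p, is_best_response a b theta p (xs p)).

Local Notation F := (polyPhi theta).

Lemma deriv2_polyPhi_gt0 x : x \in `]a, b[ -> 0 < (deriv (deriv F)).[x].
Proof.
rewrite in_itv /= => /andP[ax xb]; rewrite horner_deriv2_polyPhi.
have /theta_in/andP[+ _] : a <= x <= b by rewrite !ltW.
exact: lt_le_trans.
Qed.

Lemma best_response_in p : a <= xs p <= b.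
Proof. by case: (xs_br p). Qed.

Lemma best_response_between p xlo xhi :
  a <= xlo -> xlo <= xhi -> xhi <= b ->
  - (deriv F).[xhi] <= p <= - (deriv F).[xlo] -> xlo <= xs p <= xhi.
Proof.
move=> axlo xlohi xhib p_in.
apply: (tilted_minimizer_between deriv2_polyPhi_gt0) p_in (best_response_in p) _ => //.
by move=> z zab; rewrite -!cost_polyPhi; case: (xs_br p) => _; apply.
Qed.

Lemma measurable_best_response : measurable_fun setT xs.
Proof.
apply: nonincreasing_measurable => //.
apply: (@tilted_argmin_nonincreasing _ [set x | a <= x <= b] (horner F)) => [|p z zab].
  exact: best_response_in.
by rewrite -!cost_polyPhi; case: (xs_br p) => _; apply.
Qed.

Section InteriorMoment.
Variable sigma : R.
Hypotheses (ab : a < b) (sigma_gt0 : 0 < sigma).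

Local Notation P := (normal_prob 0 sigma).

Definition interior_ind (x : R) : R := if (a < x) && (x < b) then 1 else 0.

Lemma measurable_interior_ind : measurable_fun setT interior_ind.
Proof.
have -> : interior_ind = \1_`]a, b[.
  by apply/funext => x; rewrite indicE /interior_ind mem_setE in_itv /=; case: ifP.
by apply: measurable_indic; exact: measurable_itv.
Qed.

Lemma gradPhi_outer_entry j k (x : R) :
  (gradPhi d x *m (gradPhi d x)^T) j k = (j.+1%:R * x ^+ j) * (k.+1%:R * x ^+ k).
Proof. by rewrite !mxE big_ord1 !mxE. Qed.

Lemma integrable_horner_interior (q : {poly R}) :
  P.-integrable setT (EFin \o fun p => q.[xs p] * interior_ind (xs p)).
Proof.
have [C q_le] := poly_itv_bound q a b.
apply: (@bounded_integrable _ _ _ _ _ C).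
  apply: (measurableT_comp (f := fun x => q.[x] * interior_ind x));
    last exact: measurable_best_response.
  apply: measurable_funM; last exact: measurable_interior_ind.
  exact: continuous_measurable_fun (@continuous_horner R q).
move=> p; rewrite normrM -[leRHS]mulr1 ler_pM ?q_le ?best_response_in //.
by rewrite /interior_ind; case: ifP; rewrite ?normr1 ?normr0.
Qed.

Lemma integrable_moment_entry j k : P.-integrable setT
  (EFin \o fun p => (gradPhi d (xs p) *m (gradPhi d (xs p))^T) j k * interior_ind (xs p)).
Proof.
have := integrable_horner_interior (('X^j *+ j.+1) * ('X^k *+ k.+1)).
apply: eq_integrable => // p _ /=.
by rewrite gradPhi_outer_entry hornerM !hornerMn !hornerXn !mulr_natl.
Qed.

Lemma quad_form_Exi (v : 'cV[R]_d) : (v^T *m Exi d a b sigma xs *m v) 0 0 =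
  \int[P]_p (((deriv (polyPhi v)).[xs p]) ^+ 2 * interior_ind (xs p)).
Proof.
pose G p := interior_ind (xs p) *: (gradPhi d (xs p) *m (gradPhi d (xs p))^T).
have -> : Exi d a b sigma xs = \matrix_(j, k) \int[P]_p G p j k.
  apply/matrixP => j k; rewrite !mxE; apply: eq_Rintegral => p _.
  by rewrite [G p j k]mxE mulrC.
rewrite Rintegral_quad_form => [|j k]; last first.
  have := integrable_moment_entry j k.
  by apply: eq_integrable => // p _ /=; rewrite [G p j k]mxE mulrC.
apply: eq_Rintegral => p _.
rewrite -scalemxAr -scalemxAl mxE mulrC mulmxA -[_ *m _ *m v]mulmxA.
rewrite -[X in _ *m (_ *m X)]trmxK -trmx_mul mxE big_ord1.
set s := v^T *m _.
by rewrite [s^T _ _]mxE -expr2 /s horner_deriv_polyPhi.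
Qed.

Lemma quad_form_Exi_gt0 (v : 'cV[R]_d) : v != 0 ->
  0 < (v^T *m Exi d a b sigma xs *m v) 0 0.
Proof.
move=> v_neq0; rewrite quad_form_Exi; set Q := deriv (polyPhi v).
have Q_neq0 : Q != 0 by rewrite deriv_polyPhi_eq0.
have [x0 /andP[ax0 x0b] Qx0_neq0] := exists_noroot_in_itv Q_neq0 ab.
have [eta eta_gt0 Q_near] := horner_bounded_away_near Qx0_neq0.
have step_gt0 : 0 < Num.min eta (b - x0) by rewrite lt_min eta_gt0 subr_gt0.
pose xhi := x0 + Num.min eta (b - x0) / 2.
have x0_lt_xhi : x0 < xhi by rewrite ltrDl divr_gt0.
have xhi_lt_b : xhi < b.
  have : Num.min eta (b - x0) <= b - x0 by rewrite ge_min lexx orbT.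
  rewrite /xhi; lra.
have xhi_near : xhi - x0 < eta.
  have : Num.min eta (b - x0) <= eta by rewrite ge_min lexx.
  rewrite /xhi; lra.
pose I := `[- (deriv F).[xhi], - (deriv F).[x0]]%classic.
have I_nondeg : - (deriv F).[xhi] < - (deriv F).[x0].
  rewrite ltrN2 (ltr_hornerW deriv2_polyPhi_gt0) // in_itv /=.
    by rewrite !ltW.
  by rewrite ltW ?(lt_trans ax0) //= ltW.
apply: (@Rintegral_gt0_indic_le _ _ R P _ I ((`|Q.[x0]| / 2) ^+ 2)).
- exact: measurable_itv.
- exact: normal_prob_itv_gt0 (lt0r_neq0 sigma_gt0) I_nondeg.
- by rewrite exprn_gt0 // divr_gt0 ?normr_gt0.
- have := integrable_horner_interior (Q ^+ 2).
  by apply: eq_integrable => // p _ /=; rewrite horner_exp.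
move=> p; rewrite indicE; have [pI|_] := boolP (p \in I); last first.
  by rewrite mulr0 mulr_ge0 ?sqr_ge0 // /interior_ind; case: ifP.
have /andP[x0_le xs_le] : x0 <= xs p <= xhi.
  apply: best_response_between; [exact: ltW | exact: ltW | exact: ltW |].
  by move: pI; rewrite /I inE /= in_itv.
have -> : interior_ind (xs p) = 1.
  by rewrite /interior_ind (lt_le_trans ax0 x0_le) (le_lt_trans xs_le xhi_lt_b).
rewrite !mulr1 -[Q.[xs p] ^+ 2]real_normK ?num_real // lerXn2r ?nnegrE ?divr_ge0 //.
by apply: Q_near; rewrite ger0_norm ?subr_ge0 //; lra.
Qed.

End InteriorMoment.

End BestResponse.

Theorem lemma2 (R : realType) (d : nat) (a b m M sigma : R)
  (theta : 'cV[R]_d) (xs : R -> R) :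
  a < b -> 0 < m -> m <= M ->
  Theta d a b m M theta ->
  0 < sigma ->
  (forall p : R, is_best_response a b theta p (xs p)) ->
  exists delta : R, 0 < delta /\
    psd (Exi d a b sigma xs - delta%:M).
Proof.
(* Only the lower curvature bound m enters. *)
move=> ab m_gt0 _ theta_in sigma_gt0 xs_br.
apply: pos_def_psd_sub_scalar => v.
exact: (quad_form_Exi_gt0 _ theta_in).
Qed.
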